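(* For every $\epsilon>0$ and every $\mathbf{x}=(x,y,z)\in\mathbb{R}^3\setminus N$, $$\frac{\partial R_\epsilon}{\partial z}(\mathbf{x})=0\iff z=0 .$$
   Context: Fix $\mu>0$, $\lambda>0$, $e\in(0,1)$ and set $a=\lambda^2/\mu$. For $\mathbf{x}=(x,y,z)\in\mathbb{R}^3$ with Euclidean norm $|\mathbf{x}|$ let $\nu(\mathbf{x})=\frac{\mu}{\lambda^2}\big(|\mathbf{x}|-\frac{x}{e}-\frac{\mathrm{i}y\sqrt{1-e^2}}{e}\big)\in\mathbb{C}$. $\sqrt{\cdot}$ denotes the principal branch of the complex square root (cut along $(-\infty,0]$). Let $N=\{0\}\cup\{\mathbf{x}: y=0,\ \nu(\mathbf{x})\in[0,4]\}$ (a closed Lebesgue-null set). For $\epsilon>0$ define on $\mathbb{R}^3\setminus N$ the real analytic function $$R_\epsilon(\mathbf{x})=\frac{\lambda}{\epsilon^2}\Big[\ln|\nu|+2\ln\big|1+\sqrt{1-4/\nu}\big|-\frac{\mu|\mathbf{x}|}{\lambda^2}+\tfrac12\operatorname{Re}\big(\nu(1-\sqrt{1-4/\nu})\big)\Big],$$ i.e. $R_\epsilon=\operatorname{Re}\log\psi_\epsilon$ for the limiting wave function $\psi_\epsilon=\nu^{\lambda/\epsilon^2}(1+\sqrt{1-4/\nu})^{2\lambda/\epsilon^2}\exp\big(-\frac{\mu|\mathbf{x}|}{\lambda\epsilon^2}+\frac{\lambda\nu}{2\epsilon^2}(1-\sqrt{1-4/\nu})\big)$. Put $R:=\epsilon^2R_\epsilon$,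 which is independent of $\epsilon$. *)

From Stdlib Require Import Reals.
Open Scope R_scope.

Definition C : Type := (R * R)%type.
Definition Cre (w : C) : R := fst w.
Definition Cim (w : C) : R := snd w.
Definition Cof (r : R) : C := (r, 0).
Definition Cadd (u v : C) : C := (fst u + fst v, snd u + snd v).
Definition Csub (u v : C) : C := (fst u - fst v, snd u - snd v).
Definition Cmul (u v : C) : C :=
  (fst u * fst v - snd u * snd v, fst u * snd v + snd u * fst v).
Definition Cmod (w : C) : R := sqrt (fst w ^ 2 + snd w ^ 2).
Definition Cinv (w : C) : C :=
  (fst w / (fst w ^ 2 + snd w ^ 2), - snd w / (fst w ^ 2 + snd w ^ 2)).
Definition Cdiv (u v : C) : C := Cmul u (Cinv v).

(* Principal square root (branch cut along (-oo,0], Re >= 0,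
   and Im >= 0 on the cut). *)
Definition Csqrt (w : C) : C :=
  (sqrt ((Cmod w + fst w) / 2),
   if Rlt_dec (snd w) 0 then - sqrt ((Cmod w - fst w) / 2)
   else sqrt ((Cmod w - fst w) / 2)).

Definition norm3 (x y z : R) : R := sqrt (x ^ 2 + y ^ 2 + z ^ 2).

Definition nu (mu lam e x y z : R) : C :=
  (mu / lam ^ 2 * (norm3 x y z - x / e),
   mu / lam ^ 2 * (- (y * sqrt (1 - e ^ 2) / e))).

Definition inN (mu lam e x y z : R) : Prop :=
  (x = 0 /\ y = 0 /\ z = 0) \/
  (y = 0 /\ Cim (nu mu lam e x y z) = 0 /\
   0 <= Cre (nu mu lam e x y z) <= 4).

Definition sq (mu lam e x y z : R) : C :=
  Csqrt (Csub (Cof 1) (Cdiv (Cof 4) (nu mu lam e x y z))).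

Definition Reps (mu lam e eps x y z : R) : R :=
  let v := nu mu lam e x y z in
  let s := sq mu lam e x y z in
  lam / eps ^ 2 *
  ( ln (Cmod v) + 2 * ln (Cmod (Cadd (Cof 1) s))
    - mu * norm3 x y z / lam ^ 2
    + / 2 * Cre (Cmul v (Csub (Cof 1) s)) ).

From Stdlib Require Import Reals Lra Psatz.
Open Scope R_scope.

(* For fixed (x, y) the point nu(x, y, z) depends on z only
   through r = |x|: nu = c (r - x0) + i q with c = mu/lam^2, x0 = x/e and q
   the constant imaginary part.  Hence R_eps = (lam/eps^2) G(|x|) for a
   one-variable "profile" G, and dR_eps/dz = (lam/eps^2) G'(r) z/r.
   Writing s = sqrt(1 - 4/nu), so that nu = 4/(1 - s^2), the holomorphic
   function log nu + 2 log(1 + s) - c r + nu (1 - s)/2 has r-derivative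
   -c (1 + s)/2, hence G'(r) = -c (1 + Re s)/2 < 0 since Re s >= 0.
   So the z-derivative vanishes exactly when z = 0. *)
(* Stdlib's rules for [derivable_pt_lim] are stated for the pointwise
   operations [(f + g)%F] etc.; these restatements on lambda terms, whose
   derivative is an existential variable, let [derive] below compute
   derivatives of explicit expressions by repeated [eapply]. *)
Lemma d_ext f g x l : (forall t, f t = g t) -> derivable_pt_lim g x l -> derivable_pt_lim f x l.
Proof. intros H D eps He. destruct (D eps He) as [d Hd]. exists d. intros h h0 hd.
rewrite !H. apply Hd; auto. Qed.

Lemma d_local f g x l d : 0 < d -> (forall t, Rabs (t - x) < d -> f t = g t) ->
  derivable_pt_lim g x l -> derivable_pt_lim f x l.
Proof. intros Hd0 H D eps He. destruct (D eps He) as [d' Hd].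
assert (Hm : 0 < Rmin d d') by (apply Rmin_pos; [lra| apply cond_pos]).
exists (mkposreal _ Hm). intros h h0 hd. simpl in hd.
rewrite (H x), (H (x+h)). apply Hd; auto. apply Rlt_le_trans with (1:=hd); apply Rmin_r.
replace (x+h-x) with h by ring. apply Rlt_le_trans with (1:=hd); apply Rmin_l.
replace (x-x) with 0 by ring. rewrite Rabs_R0; lra. Qed.

Lemma d_eq f x l l' : derivable_pt_lim f x l -> l = l' -> derivable_pt_lim f x l'.
Proof. intros; subst; auto. Qed.
Lemma d_const k x : derivable_pt_lim (fun _ => k) x 0.
Proof. apply (derivable_pt_lim_const k x). Qed.
Lemma d_id x : derivable_pt_lim (fun t => t) x 1.
Proof. apply derivable_pt_lim_id. Qed.
Lemma d_plus f g x a b : derivable_pt_lim f x a -> derivable_pt_lim g x b ->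
  derivable_pt_lim (fun t => f t + g t) x (a + b).
Proof. intros. apply (derivable_pt_lim_plus f g); auto. Qed.
Lemma d_minus f g x a b : derivable_pt_lim f x a -> derivable_pt_lim g x b ->
  derivable_pt_lim (fun t => f t - g t) x (a - b).
Proof. intros. apply (derivable_pt_lim_minus f g); auto. Qed.
Lemma d_mult f g x a b : derivable_pt_lim f x a -> derivable_pt_lim g x b ->
  derivable_pt_lim (fun t => f t * g t) x (a * g x + f x * b).
Proof. intros. apply (derivable_pt_lim_mult f g); auto. Qed.
Lemma d_opp f x a : derivable_pt_lim f x a -> derivable_pt_lim (fun t => - f t) x (- a).
Proof. intros. apply (derivable_pt_lim_opp f); auto. Qed.
Lemma d_div f g x a b : derivable_pt_lim f x a -> derivable_pt_lim g x b -> g x <> 0 ->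
  derivable_pt_lim (fun t => f t / g t) x ((a * g x - b * f x) / (g x)^2).
Proof. intros. replace ((g x)^2) with (Rsqr (g x)) by (unfold Rsqr; ring).
apply (derivable_pt_lim_div f g); auto. Qed.
Lemma d_pow2 f x a : derivable_pt_lim f x a -> derivable_pt_lim (fun t => f t ^ 2) x (2 * f x * a).
Proof. intros. apply d_ext with (fun t => f t * f t). intros; ring.
replace (2 * f x * a) with (a * f x + f x * a) by ring. apply d_mult; auto. Qed.
Lemma d_sqrt f x a : derivable_pt_lim f x a -> 0 < f x ->
  derivable_pt_lim (fun t => sqrt (f t)) x (/ (2 * sqrt (f x)) * a).
Proof. intros. apply (derivable_pt_lim_comp f sqrt); auto. apply derivable_pt_lim_sqrt; auto. Qed.
Lemma d_ln f x a : derivable_pt_lim f x a -> 0 < f x ->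
  derivable_pt_lim (fun t => ln (f t)) x (/ f x * a).
Proof. intros. apply (derivable_pt_lim_comp f ln); auto. apply derivable_pt_lim_ln; auto. Qed.
Lemma d_comp f g x a b : derivable_pt_lim f x a -> derivable_pt_lim g (f x) b ->
  derivable_pt_lim (fun t => g (f t)) x (b * a).
Proof. intros. apply (derivable_pt_lim_comp f g); auto. Qed.


Ltac dstep := match goal with |- derivable_pt_lim _ _ _ =>
  first [ eassumption | apply d_const | apply d_id | eapply d_plus | eapply d_minus
        | eapply d_pow2 | eapply d_div | eapply d_mult | eapply d_opp
        | eapply d_sqrt | eapply d_ln ] end.
(* [derive] proves [derivable_pt_lim f x l] up to the identity between the
   computed derivative and [l], which is left as the last goal. *)
Ltac derive := eapply d_eq; [repeat dstep | ]; cbv beta.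

Lemma pow2_pos (x : R) : x <> 0 -> 0 < x ^ 2.
Proof. intro hx. replace (x ^ 2) with (Rsqr x) by (unfold Rsqr; ring). now apply Rsqr_pos_lt. Qed.

Lemma Cmod_bounds (w : R * R) :
  0 <= Cmod w /\ Cmod w ^ 2 = fst w ^ 2 + snd w ^ 2 /\ 0 <= Cmod w + fst w /\ 0 <= Cmod w - fst w.
Proof.
unfold Cmod. set (S := sqrt _).
assert (hS : 0 <= S) by apply sqrt_pos.
assert (hS2 : S ^ 2 = fst w ^ 2 + snd w ^ 2) by (apply pow2_sqrt; nra).
repeat split; auto; nra.
Qed.

(* Off the real axis these bounds are strict, which keeps the square roots
   defining [Csqrt] away from 0. *)
Lemma Cmod_strict (w : R * R) : snd w <> 0 -> 0 < Cmod w + fst w /\ 0 < Cmod w - fst w.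
Proof.
intro hv. destruct (Cmod_bounds w) as (h0 & h1 & _ & _).
assert (0 < snd w ^ 2) by (apply pow2_pos; auto). split; nra.
Qed.

Lemma Csqrt_square (w : R * R) :
  fst (Csqrt w) ^ 2 - snd (Csqrt w) ^ 2 = fst w /\ 2 * fst (Csqrt w) * snd (Csqrt w) = snd w.
Proof.
destruct (Cmod_bounds w) as (h0 & h1 & h2 & h3).
unfold Csqrt; cbn [fst snd]. set (S := Cmod w) in *. set (U := fst w) in *. set (V := snd w) in *.
assert (hA : sqrt ((S + U) / 2) ^ 2 = (S + U) / 2) by (apply pow2_sqrt; lra).
assert (hB : sqrt ((S - U) / 2) ^ 2 = (S - U) / 2) by (apply pow2_sqrt; lra).
assert (pA := sqrt_pos ((S + U) / 2)). assert (pB := sqrt_pos ((S - U) / 2)).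
set (a := sqrt ((S + U) / 2)) in *. set (b := sqrt ((S - U) / 2)) in *.
assert (hab : (2 * a * b) ^ 2 = V ^ 2).
{ replace ((2 * a * b) ^ 2) with (4 * a ^ 2 * b ^ 2) by ring. rewrite hA, hB. nra. }
assert (0 <= a * b) by nra.
destruct (Rlt_dec V 0); split; nra.
Qed.

(* The derivative of [ln (sqrt m)] written without square roots. *)
Lemma inv_sqrt_half (m X : R) : 0 < m -> / sqrt m * (/ (2 * sqrt m) * X) = X / (2 * m).
Proof.
intro hm. pose proof (sqrt_lt_R0 _ hm). rewrite <- (sqrt_sqrt m) at 3 by lra.
field. lra.
Qed.

(* Real part of  d/dr [log nu + 2 log (1 + s) - c r + nu (1 - s)/2] = -c (1 + s)/2
   where nu = P + i q with P' = c, s = A + i B with s^2 = 1 - 4/nu (first two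
   hypotheses) and s' = dA + i dB obtained by differentiating s^2 (last two). *)
Lemma profile_slope_identity c P q A B dA dB :
  P ^ 2 + q ^ 2 <> 0 -> (1 + A) ^ 2 + B ^ 2 <> 0 -> A ^ 2 + B ^ 2 <> 0 ->
  A ^ 2 - B ^ 2 = 1 - 4 * P / (P ^ 2 + q ^ 2) -> 2 * A * B = 4 * q / (P ^ 2 + q ^ 2) ->
  2 * A * dA - 2 * B * dB = 4 * c * (P ^ 2 - q ^ 2) / (P ^ 2 + q ^ 2) ^ 2 ->
  2 * (dA * B + A * dB) = -8 * c * P * q / (P ^ 2 + q ^ 2) ^ 2 ->
  P * c / (P ^ 2 + q ^ 2) + (2 * (1 + A) * dA + 2 * B * dB) / ((1 + A) ^ 2 + B ^ 2) - c
   + / 2 * (c * (1 - A) - P * dA + q * dB) = - c * (1 + A) / 2.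
Proof.
intros HM HN HS E1 E2 E3 E4.
remember (P ^ 2 + q ^ 2) as M eqn:hMe.
(* Express P, q, dA, dB through A, B and M, then M through A, B. *)
assert (hP : P = (1 - A ^ 2 + B ^ 2) * M / 4).
{ apply (Rmult_eq_reg_l (4 / M)); [| apply Rmult_integral_contrapositive; split; [lra|now apply Rinv_neq_0_compat]].
  transitivity (1 - (1 - 4 * P / M)); [field; auto|]. rewrite <- E1. field; auto. }
assert (hq : q = (2 * A * B) * M / 4) by (rewrite E2; field; auto).
assert (hdA : dA = (A * (4 * c * (P ^ 2 - q ^ 2) / M ^ 2) + B * (-8 * c * P * q / M ^ 2))
                   / (2 * (A ^ 2 + B ^ 2))) by (rewrite <- E3, <- E4; field; auto).
assert (hdB : dB = (A * (-8 * c * P * q / M ^ 2) - B * (4 * c * (P ^ 2 - q ^ 2) / M ^ 2))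
                   / (2 * (A ^ 2 + B ^ 2))) by (rewrite <- E3, <- E4; field; auto).
rewrite hdA, hdB. rewrite hP, hq in hMe.
set (Q := (1 - A ^ 2 + B ^ 2) ^ 2 + (2 * A * B) ^ 2).
assert (HQ : M * Q = 16).
{ apply (Rmult_eq_reg_l M); auto.
  transitivity (16 * (((1 - A ^ 2 + B ^ 2) * M / 4) ^ 2 + ((2 * A * B) * M / 4) ^ 2)).
  - unfold Q; field.
  - rewrite <- hMe; ring. }
assert (HQ0 : Q <> 0) by (intro h; rewrite h in HQ; lra).
replace M with (16 / Q) by (rewrite <- HQ; field; auto).
rewrite hP, hq. replace M with (16 / Q) by (rewrite <- HQ; field; auto).
unfold Q. field. repeat split; auto.
Qed.

(* The radial profile G: [c] is mu/lam^2, [x0] is x/e, [q] is Im nu, and the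
   variable r stands for |x|.  Then nu = nuRe r + i q, w = 1 - 4/nu and
   s = sqrt w, all in real and imaginary parts. *)
Section Profile.
Variables c x0 q : R.

Definition nuRe (r : R) : R := c * (r - x0).
Definition nuAbs2 (r : R) : R := nuRe r ^ 2 + q ^ 2.
Definition wRe (r : R) : R := 1 - 4 * nuRe r / nuAbs2 r.
Definition wIm (r : R) : R := 4 * q / nuAbs2 r.
Definition wAbs (r : R) : R := Cmod (wRe r, wIm r).
Definition sRe (r : R) : R := fst (Csqrt (wRe r, wIm r)).
Definition sIm (r : R) : R := snd (Csqrt (wRe r, wIm r)).
Definition profile (r : R) : R :=
  ln (sqrt (nuRe r ^ 2 + q ^ 2)) + 2 * ln (sqrt ((1 + sRe r) ^ 2 + (0 + sIm r) ^ 2))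
  - c * r + / 2 * (nuRe r * (1 - sRe r) - q * (0 - sIm r)).

Lemma nuRe_deriv r : derivable_pt_lim nuRe r c.
Proof. unfold nuRe. derive. ring. Qed.

Lemma w_deriv r : nuAbs2 r <> 0 ->
  derivable_pt_lim wRe r (4 * c * (nuRe r ^ 2 - q ^ 2) / nuAbs2 r ^ 2) /\
  derivable_pt_lim wIm r (-8 * c * nuRe r * q / nuAbs2 r ^ 2).
Proof.
intro hM. pose proof (nuRe_deriv r).
assert (dM : derivable_pt_lim nuAbs2 r (2 * nuRe r * c)).
{ unfold nuAbs2. derive. ring. }
split; [unfold wRe | unfold wIm]; derive; auto; unfold nuAbs2 in *; field; auto.
Qed.

Lemma sRe_deriv r : nuAbs2 r <> 0 -> 0 < wAbs r + wRe r ->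
  exists dA, derivable_pt_lim sRe r dA.
Proof.
intros hM hSU. destruct (w_deriv r hM) as [dU dV].
unfold wAbs, Cmod in hSU; cbn [fst snd] in hSU.
assert (hUV : 0 < wRe r ^ 2 + wIm r ^ 2).
{ destruct (Req_dec (wRe r ^ 2 + wIm r ^ 2) 0) as [h0|h0]; [|nra].
  assert (wRe r = 0) by nra. rewrite h0, sqrt_0 in hSU. lra. }
eexists. apply d_ext with (fun t => sqrt ((sqrt (wRe t ^ 2 + wIm t ^ 2) + wRe t) / 2)).
{ reflexivity. }
derive; auto; lra.
Qed.

(* Differentiating s^2 = w: the real and imaginary parts of 2 s s' = w'. *)
Lemma s_deriv_relations r dA dB : nuAbs2 r <> 0 ->
  derivable_pt_lim sRe r dA -> derivable_pt_lim sIm r dB ->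
  2 * sRe r * dA - 2 * sIm r * dB = 4 * c * (nuRe r ^ 2 - q ^ 2) / nuAbs2 r ^ 2 /\
  2 * (dA * sIm r + sRe r * dB) = -8 * c * nuRe r * q / nuAbs2 r ^ 2.
Proof.
intros hM hA hB. destruct (w_deriv r hM) as [dU dV]. split.
- apply (uniqueness_limite (fun t => sRe t ^ 2 - sIm t ^ 2) r).
  + derive. ring.
  + apply d_ext with wRe; auto. intro t. apply (Csqrt_square (wRe t, wIm t)).
- apply (uniqueness_limite (fun t => 2 * sRe t * sIm t) r).
  + derive. ring.
  + apply d_ext with wIm; auto. intro t. apply (Csqrt_square (wRe t, wIm t)).
Qed.

Lemma profile_deriv r dB : nuAbs2 r <> 0 -> 0 < wAbs r + wRe r ->
  derivable_pt_lim sIm r dB -> derivable_pt_lim profile r (- c * (1 + sRe r) / 2).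
Proof.
intros hM hSU hB. destruct (sRe_deriv r hM hSU) as [dA hA].
destruct (s_deriv_relations r dA dB hM hA hB) as [E3 E4].
destruct (Csqrt_square (wRe r, wIm r)) as [E1 E2]. fold (sRe r) (sIm r) in E1, E2; cbn [fst snd] in E1, E2.
assert (hApos : 0 < sRe r) by (apply sqrt_lt_R0; unfold wAbs in hSU; cbn [fst snd]; lra).
pose proof (nuRe_deriv r).
unfold wRe, wIm, nuAbs2 in E1, E2, E3, E4, hM.
set (P := nuRe r) in *. set (A := sRe r) in *. set (B := sIm r) in *.
assert (hMp : 0 < P ^ 2 + q ^ 2) by (assert (0 <= P ^ 2 + q ^ 2) by nra; lra).
assert (hNp : 0 < (1 + A) ^ 2 + (0 + B) ^ 2) by nra.
unfold profile. derive; auto using sqrt_lt_R0.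
fold P A B. rewrite !inv_sqrt_half by assumption.
rewrite <- (profile_slope_identity c P q A B dA dB); auto; try nra.
field. nra.
Qed.

(* Off the real axis of nu, the sign of Im(1 - 4/nu) is that of q and never
   changes, so the branch choice of [Csqrt] is fixed and [sIm] is smooth. *)
Lemma sIm_deriv_off_axis r : q <> 0 ->
  (exists dB, derivable_pt_lim sIm r dB) /\ 0 < wAbs r + wRe r /\ nuAbs2 r <> 0.
Proof.
intro hq. pose proof (pow2_pos q hq) as hq2.
assert (hMp : forall t, 0 < nuAbs2 t) by (intro t; unfold nuAbs2; nra).
assert (hMi : forall t, 0 < / nuAbs2 t) by (intro t; apply Rinv_0_lt_compat; auto).
assert (hsign : forall t, q < 0 -> wIm t < 0) by (intros t h; unfold wIm, Rdiv; specialize (hMi t); nra).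
assert (hsign' : forall t, 0 < q -> 0 < wIm t) by (intros t h; unfold wIm, Rdiv; specialize (hMi t); nra).
assert (hM : nuAbs2 r <> 0) by (specialize (hMp r); lra).
destruct (w_deriv r hM) as [dU dV].
assert (hV : wIm r <> 0) by (destruct (Rlt_dec q 0); [specialize (hsign r)|specialize (hsign' r)]; lra).
destruct (Cmod_strict (wRe r, wIm r) hV) as [hSU hSmU]; cbn [fst snd] in hSU, hSmU.
fold (wAbs r) in hSU, hSmU.
assert (hUV : 0 < wRe r ^ 2 + wIm r ^ 2) by (pose proof (pow2_pos _ hV); nra).
split; [|split; auto].
unfold wAbs, Cmod in hSmU; cbn [fst snd] in hSmU.
destruct (Rlt_dec q 0) as [hneg|hpos]; eexists.
- apply d_ext with (fun t => - sqrt ((sqrt (wRe t ^ 2 + wIm t ^ 2) - wRe t) / 2)).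
  { intro t. unfold sIm, Csqrt; cbn [snd]. destruct (Rlt_dec (wIm t) 0) as [|n]; auto.
    exfalso; apply n, hsign, hneg. }
  derive; auto; lra.
- apply d_ext with (fun t => sqrt ((sqrt (wRe t ^ 2 + wIm t ^ 2) - wRe t) / 2)).
  { intro t. unfold sIm, Csqrt; cbn [snd]. destruct (Rlt_dec (wIm t) 0) as [h|]; auto.
    exfalso. assert (0 < wIm t) by (apply hsign'; lra). lra. }
  derive; auto; lra.
Qed.

Lemma real_axis_point t : q = 0 -> (nuRe t < 0 \/ 4 < nuRe t) ->
  0 < wRe t /\ wAbs t = wRe t /\ sIm t = 0 /\ nuAbs2 t <> 0.
Proof.
intros hq hP. pose proof (pow2_pos (nuRe t) ltac:(lra)) as hP2.
assert (hM : nuAbs2 t = nuRe t ^ 2) by (unfold nuAbs2; rewrite hq; ring).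
assert (hU : 0 < wRe t).
{ unfold wRe. rewrite hM.
  replace (1 - 4 * nuRe t / nuRe t ^ 2) with (nuRe t * (nuRe t - 4) / nuRe t ^ 2) by (field; lra).
  apply Rdiv_lt_0_compat; nra. }
assert (hV : wIm t = 0) by (unfold wIm, Rdiv; rewrite hq; ring).
assert (hS : wAbs t = wRe t).
{ unfold wAbs, Cmod; cbn [fst snd]. rewrite hV.
  replace (wRe t ^ 2 + 0 ^ 2) with (wRe t ^ 2) by ring. apply sqrt_pow2; lra. }
repeat split; auto; [|lra].
unfold sIm, Csqrt; cbn [fst snd]. fold (wAbs t). rewrite hS, hV.
destruct (Rlt_dec 0 0); [lra|]. replace ((wRe t - wRe t) / 2) with 0 by field. apply sqrt_0.
Qed.

(* Consequently Im s is locally zero, with derivative 0. *)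
Lemma sIm_deriv_on_axis r : 0 < c -> q = 0 -> (nuRe r < 0 \/ 4 < nuRe r) ->
  derivable_pt_lim sIm r 0 /\ 0 < wAbs r + wRe r /\ nuAbs2 r <> 0.
Proof.
intros hc hq hP. destruct (real_axis_point r hq hP) as (h1 & h2 & h3 & h4).
split; [|split; [lra|auto]].
(* m is the distance from nu(r) to the segment [0, 4]; it is not crossed for
   |t - r| < m/c. *)
set (m := Rmax (nuRe r - 4) (- nuRe r)).
assert (hm : 0 < m) by (unfold m; destruct hP; [apply Rlt_le_trans with (- nuRe r); [lra|apply Rmax_r]
   | apply Rlt_le_trans with (nuRe r - 4); [lra|apply Rmax_l]]).
apply d_local with (fun _ => 0) (m / c); [apply Rdiv_lt_0_compat; auto | | apply d_const].
intros t ht. apply Rabs_def2 in ht. destruct ht as [ha hb].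
assert (hPt : nuRe t = nuRe r + c * (t - r)) by (unfold nuRe; ring).
assert (hct : c * (t - r) < m /\ - m < c * (t - r)).
{ replace m with (c * (m / c)) by (field; lra). split; nra. }
apply (real_axis_point t hq).
destruct hP as [hP|hP]; [left | right].
- assert (m = - nuRe r) by (unfold m; apply Rmax_right; lra). lra.
- assert (m = nuRe r - 4) by (unfold m; apply Rmax_left; lra). lra.
Qed.

Lemma profile_regular_deriv r : 0 < c -> (q <> 0 \/ nuRe r < 0 \/ 4 < nuRe r) ->
  derivable_pt_lim profile r (- c * (1 + sRe r) / 2).
Proof.
intros hc hreg. destruct (Req_dec q 0) as [hq|hq].
- destruct hreg as [|hP]; [contradiction|].
  destruct (sIm_deriv_on_axis r hc hq hP) as (hB & hSU & hM). exact (profile_deriv r 0 hM hSU hB).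
- destruct (sIm_deriv_off_axis r hq) as ([dB hB] & hSU & hM). exact (profile_deriv r dB hM hSU hB).
Qed.
End Profile.

(* In coordinates, R_eps is lam/eps^2 times the profile evaluated at |x|:
   for fixed x, y the point nu moves along the horizontal line Im nu = q. *)
Lemma Reps_radial mu lam e eps x y t : lam <> 0 ->
  Reps mu lam e eps x y t =
  lam / eps ^ 2 * profile (mu / lam ^ 2) (x / e) (mu / lam ^ 2 * (- (y * sqrt (1 - e ^ 2) / e)))
    (norm3 x y t).
Proof.
intro hl. unfold Reps, sq, nu, profile, sRe, sIm, wRe, wIm, nuAbs2, nuRe.
set (c := mu / lam ^ 2). set (q := c * (- (y * sqrt (1 - e ^ 2) / e))).
set (r := norm3 x y t).
replace (Csub (Cof 1) (Cdiv (Cof 4) (c * (r - x / e), q))) with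
  (1 - 4 * (c * (r - x / e)) / ((c * (r - x / e)) ^ 2 + q ^ 2),
   4 * q / ((c * (r - x / e)) ^ 2 + q ^ 2)).
- replace (mu * r / lam ^ 2) with (c * r) by (unfold c, Rdiv; ring). reflexivity.
- unfold Csub, Cof, Cdiv, Cmul, Cinv; cbn [fst snd]. f_equal; unfold Rdiv; ring.
Qed.

Lemma norm3_deriv x y z : 0 < x ^ 2 + y ^ 2 + z ^ 2 ->
  derivable_pt_lim (fun t => norm3 x y t) z (z / norm3 x y z).
Proof.
intro hpos. pose proof (sqrt_lt_R0 _ hpos).
unfold norm3. derive; auto. field. lra.
Qed.

Lemma outside_N mu lam e x y z : 0 < mu -> 0 < lam -> 0 < e < 1 -> ~ inN mu lam e x y z ->
  let c := mu / lam ^ 2 in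
  let q := c * (- (y * sqrt (1 - e ^ 2) / e)) in
  0 < x ^ 2 + y ^ 2 + z ^ 2 /\
  (q <> 0 \/ nuRe c (x / e) (norm3 x y z) < 0 \/ 4 < nuRe c (x / e) (norm3 x y z)).
Proof.
intros hmu hlam he hN c q.
assert (hc : 0 < c) by (unfold c; apply Rdiv_lt_0_compat; auto; apply pow_lt; auto).
split.
- destruct (Rlt_dec 0 (x ^ 2 + y ^ 2 + z ^ 2)) as [h|h]; auto.
  exfalso. apply hN. left. repeat split; nra.
- destruct (Req_dec y 0) as [hy|hy].
  + right. change (nuRe c (x / e) (norm3 x y z)) with (Cre (nu mu lam e x y z)).
    destruct (Rlt_dec (Cre (nu mu lam e x y z)) 0); [left; auto|].
    destruct (Rlt_dec 4 (Cre (nu mu lam e x y z))); [right; auto|].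
    exfalso. apply hN. right. split; [exact hy|split; [|lra]].
    unfold Cim, nu; cbn [snd]. rewrite hy. field. lra.
  + left. assert (0 < sqrt (1 - e ^ 2)) by (apply sqrt_lt_R0; nra).
    assert (0 < / e) by (apply Rinv_0_lt_compat; lra).
    unfold q, Rdiv. intro h0. destruct (Rmult_integral _ _ h0) as [h|h]; [lra|].
    assert (y * (sqrt (1 - e ^ 2) * / e) = 0) by lra.
    destruct (Rmult_integral _ _ H1); [contradiction|]. nra.
Qed.

Theorem lemma5p1 :
  forall mu lam e eps x y z : R,
    0 < mu -> 0 < lam -> 0 < e < 1 -> 0 < eps ->
    ~ inN mu lam e x y z ->
    (derivable_pt_lim (fun t => Reps mu lam e eps x y t) z 0 <-> z = 0).
Proof.
intros mu lam e eps x y z hmu hlam he heps hN.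
destruct (outside_N mu lam e x y z hmu hlam he hN) as [hpos hreg].
set (c := mu / lam ^ 2) in *. set (kk := lam / eps ^ 2). set (x0 := x / e) in *.
set (q := c * (- (y * sqrt (1 - e ^ 2) / e))) in *. set (r0 := norm3 x y z) in *.
assert (hc : 0 < c) by (unfold c; apply Rdiv_lt_0_compat; auto; apply pow_lt; auto).
assert (hkk : 0 < kk) by (unfold kk; apply Rdiv_lt_0_compat; auto; apply pow_lt; auto).
assert (hr0 : 0 < r0) by (apply sqrt_lt_R0; auto).
(* Chain rule: dR/dz = kk * profile'(|x|) * z/|x|, and profile' < 0. *)
set (slope := kk * (- c * (1 + sRe c x0 q r0) / 2)).
assert (hslope : slope < 0).
{ assert (0 <= sRe c x0 q r0) by apply sqrt_pos.
  assert (0 < kk * (c * (1 + sRe c x0 q r0))) by (apply Rmult_lt_0_compat; nra).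
  unfold slope. nra. }
assert (HD : derivable_pt_lim (fun t => Reps mu lam e eps x y t) z (slope * (z / r0))).
{ apply d_ext with (fun t => kk * profile c x0 q (norm3 x y t)).
  { intro t. apply Reps_radial. lra. }
  pose proof (d_comp _ _ z _ _ (norm3_deriv x y z hpos) (profile_regular_deriv c x0 q r0 hc hreg)).
  derive. fold r0. unfold slope. ring. }
split.
- intro H0. pose proof (uniqueness_limite _ _ _ _ H0 HD) as h.
  assert (0 < / r0) by (apply Rinv_0_lt_compat; auto). unfold Rdiv in h.
  destruct (Rmult_integral _ _ (eq_sym h)) as [h1|h1]; [lra|].
  destruct (Rmult_integral _ _ h1); [auto|lra].
- intros ->. eapply d_eq; [exact HD|]. unfold Rdiv; ring.
Qed.
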